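(* Let $\mathcal{F}$ be an indecomposable coherent sheaf on $\mathbb{P}^1$. Then $\mathcal{F}$ is described by a defining triple $(\mathcal{F}',\mathcal{F}'',\varphi)$ of one of the following forms, where $\mathcal{F}'=\widetilde{M'}$, $\mathcal{F}''=\widetilde{M''}$ are indecomposable coherent sheaves (or $0$) on $U_1$, $U_2$ respectively and $\varphi:\mathcal{F}'|_{U_1\cap U_2}\cong\mathcal{F}''|_{U_1\cap U_2}$: (1) $(\mathcal{F}',0,0)$ with $\Gamma_{M'}$ of type 1; (2) $(0,\mathcal{F}'',0)$ with $\Gamma_{M''}$ of type 1; (3) $(\mathcal{F}',\mathcal{F}'',\varphi)$ with $\Gamma_{M'}$, $\Gamma_{M''}$ of type 2, and after choosing isomorphisms $\mathcal{F}'|_{U_1\cap U_2}\cong\mathcal{L}$ and $\mathcal{F}''|_{U_1\cap U_2}\cong\mathcal{L}$, $\varphi$ is identified with $\phi_n$ for some $n\in\mathbb{Z}$; (4) $(\mathcal{F}',\mathcal{F}'',\psi)$ with $\Gamma_{M'}$, $\Gamma_{M''}$ of type 3, and after choosing isomorphisms $\mathcal{F}'|_{U_1\cap U_2}\cong\mathcal{C}_k$ and $\mathcal{F}''|_{U_1\cap U_2}\cong\mathcal{C}_k$, $\psi$ is identified with $\psi_m$ for some $m\in\mathbb{Z}/k\mathbb{Z}$. Moreover, $\mathcal{F}$ is torsion in cases (1) and (2), and torsion-free in cases (3) and (4).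
   Context: Monoids are commutative with $1$ and absorbing $0$; a module is a pointed set $(M,* )$ with action satisfying $1m=m$, $a(bm)=(ab)m$, $0m=*$. $\mathbb P^1$ is the monoid scheme obtained by gluing $U_1=\operatorname{MSpec}(\langle t\rangle)$ and $U_2=\operatorname{MSpec}(\langle t^{-1}\rangle)$ along $U_1\cap U_2=\operatorname{MSpec}(\langle t,t^{-1}\rangle)$, where $\langle t\rangle=\{0,1,t,t^2,\dots\}$, $\langle t^{-1}\rangle=\{0,1,t^{-1},t^{-2},\dots\}$, $\langle t,t^{-1}\rangle=\{0\}\cup\{t^n:n\in\mathbb Z\}$. A coherent sheaf on $\mathbb P^1$ is equivalently a defining triple $(\mathcal F',\mathcal F'',\varphi)$ of coherent sheaves $\mathcal F'=\widetilde{M'}$ on $U_1$, $\mathcal F''=\widetilde{M''}$ on $U_2$ ($M',M''$ finitely generated modules; restriction to $U_1\cap U_2$ is localization at $t$, resp. $t^{-1}$) and a gluing isomorphism $\varphi$ over $U_1\cap U_2$. A coherent sheaf is indecomposable if non-zero and not a direct sum (sectionwise wedge sum) of two non-zero coherent sheaves. For a module $M$ over $\langle s\rangle$ ($s=t$ or $t^{-1}$), $\Gamma_M$ is the directed graph on $M\setminus\{*\}$ with edges $m\to sm$ whenever $sm\ne*$. Type 1: a rooted tree (underlying undirected graph a tree with a unique vertex without outgoing edge, reached from every vertex by a directed path). Type 2: a finite rooted tree whose root is joined to the initial vertex of an infinite directed ray $v_0\to v_1\to\cdots$. Type 3: an oriented directed cycle with rooted trees attached. $\mathcal L=\widetilde{\langle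 t,t^{-1}\rangle}$ on $U_1\cap U_2$, with automorphisms $\phi_n$ induced by multiplication by $t^n$, $n\in\mathbb Z$. $\mathcal C_k=\widetilde{C_k}$ with $C_k=\{*,1,t,\dots,t^{k-1}\}$ and $t$ acting by the cyclic permutation $1\mapsto t\mapsto\cdots\mapsto t^{k-1}\mapsto1$; its automorphisms $\psi_m$ are induced by multiplication by $t^m$ and depend only on $m\bmod k$. An element $m$ of a module is torsion if some nonzero element of the monoid sends it to $*$; a module is torsion if all elements are torsion and torsion-free if only $*$ is; a quasicoherent sheaf is torsion (resp. torsion-free) if its sections over every open affine form a torsion (resp. torsion-free) module. *)

From Stdlib Require Import ZArith Arith List Lia ClassicalEpsilon.
From Stdlib Require Import Relation_Operators.

Set Implicit Arguments.

Record monoid0 := Monoid0 {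
  mcar :> Type;
  mone : mcar;
  mzero : mcar;
  mmul : mcar -> mcar -> mcar;
  mmulA : forall a b c, mmul a (mmul b c) = mmul (mmul a b) c;
  mmulC : forall a b, mmul a b = mmul b a;
  mmul1 : forall a, mmul mone a = a;
  mmul0 : forall a, mmul mzero a = mzero }.

(* <s> = {0,1,s,s^2,...}: None = 0, Some j = s^j *)
Definition tmul (a b : option nat) : option nat :=
  match a, b with Some i, Some j => Some (i + j) | _, _ => None end.

Lemma tmulA a b c : tmul a (tmul b c) = tmul (tmul a b) c.
Proof. destruct a, b, c; simpl; try reflexivity; f_equal; lia. Qed.
Lemma tmulC a b : tmul a b = tmul b a.
Proof. destruct a, b; simpl; try reflexivity; f_equal; lia. Qed.
Lemma tmul1 a : tmul (Some 0) a = a.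
Proof. destruct a; reflexivity. Qed.
Lemma tmul0 a : tmul None a = None.
Proof. reflexivity. Qed.

Definition tmon : monoid0 := @Monoid0 (option nat) (Some 0) None tmul tmulA tmulC tmul1 tmul0.

(* <t, t^-1> = {0} u {t^n : n in Z}: None = 0, Some n = t^n *)
Definition lmul (a b : option Z) : option Z :=
  match a, b with Some i, Some j => Some (i + j)%Z | _, _ => None end.

Lemma lmulA a b c : lmul a (lmul b c) = lmul (lmul a b) c.
Proof. destruct a, b, c; simpl; try reflexivity; f_equal; lia. Qed.
Lemma lmulC a b : lmul a b = lmul b a.
Proof. destruct a, b; simpl; try reflexivity; f_equal; lia. Qed.
Lemma lmul1 a : lmul (Some 0%Z) a = a.
Proof. destruct a; reflexivity. Qed.
Lemma lmul0 a : lmul None a = None.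
Proof. reflexivity. Qed.

Definition lmon : monoid0 := @Monoid0 (option Z) (Some 0%Z) None lmul lmulA lmulC lmul1 lmul0.

Record premodule (A : monoid0) := PreModule {
  pcar :> Type;
  ppt : pcar;
  pact : mcar A -> pcar -> pcar }.

Record module (A : monoid0) := Module {
  mpre :> premodule A;
  act1 : forall m, pact mpre (mone A) m = m;
  actA : forall a b m, pact mpre a (pact mpre b m) = pact mpre (mmul A a b) m;
  act0 : forall m, pact mpre (mzero A) m = ppt mpre }.

Definition fingen A (M : premodule A) : Prop :=
  exists gs : list (pcar M), forall m,
    m = ppt M \/ exists a g, In g gs /\ m = pact M a g.

Definition is_morphism A (M N : premodule A) (f : M -> N) : Prop :=
  f (ppt M) = ppt N /\ forall a x, f (pact M a x) = pact N a (f x).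
Arguments is_morphism {A M N} f.

Definition is_iso A (M N : premodule A) (f : M -> N) : Prop :=
  is_morphism f /\ exists g : N -> M, (forall x, g (f x) = x) /\ (forall y, f (g y) = y).
Arguments is_iso {A M N} f.

Definition torsion_elt A (M : premodule A) (m : M) : Prop :=
  exists a, a <> mzero A /\ pact M a m = ppt M.
Arguments torsion_elt {A M} m.
Definition torsion_mod A (M : premodule A) : Prop := forall m : M, torsion_elt m.
Definition torsionfree_mod A (M : premodule A) : Prop :=
  forall m : M, torsion_elt m -> m = ppt M.

Definition trivial_mod A (M : premodule A) : Prop := forall m : M, m = ppt M.

(* direct sums = wedge sums, indecomposability *)
Definition submod A (M : premodule A) (P : M -> Prop) : Prop :=
  P (ppt M) /\ forall a x, P x -> P (pact M a x).
Arguments submod {A M} P.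
Definition wedge_split A (M : premodule A) (P Q : M -> Prop) : Prop :=
  submod P /\ submod Q /\ (forall x, P x -> Q x -> x = ppt M) /\ (forall x, P x \/ Q x).
Arguments wedge_split {A M} P Q.
Definition nonzero_pred A (M : premodule A) (P : M -> Prop) : Prop :=
  exists x, P x /\ x <> ppt M.
Arguments nonzero_pred {A M} P.
Definition indecomposable_mod A (M : premodule A) : Prop :=
  (exists x : M, x <> ppt M) /\
  ~ (exists P Q : M -> Prop, wedge_split P Q /\ nonzero_pred P /\ nonzero_pred Q).

Definition quot (X : Type) (R : X -> X -> Prop) : Type :=
  {P : X -> Prop | exists x, P = R x}.
Definition cls (X : Type) (R : X -> X -> Prop) (x : X) : quot R :=
  exist _ (R x) (ex_intro _ x eq_refl).
Definition repr (X : Type) (R : X -> X -> Prop) (q : quot R) : X :=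
  proj1_sig (constructive_indefinite_description _ (proj2_sig q)).

(* ---------- Localization of a <s>-module at s ----------
   m / s^n ~ m' / s^n'  iff  s^(n'+k) m = s^(n+k) m' for some k. *)
Definition locR (M : premodule tmon) (x y : pcar M * nat) : Prop :=
  exists k : nat, pact M (Some (snd y + k)) (fst x) = pact M (Some (snd x + k)) (fst y).

Definition loc_car (M : premodule tmon) : Type := quot (locR M).

(* sgn = false : s = t (module over <t>), sgn = true : s = t^-1 (module over <t^-1>).
   The localization is a module over <t,t^-1>; t^z acts as s^e with e = z or -z. *)
Definition loc_act (sgn : bool) (M : premodule tmon) (a : option Z) (q : loc_car M)
  : loc_car M :=
  match a with
  | None => cls (locR M) (ppt M, 0)
  | Some z =>
      let e := (if sgn then Z.opp z else z) in
      let x := repr q in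
      cls (locR M) (pact M (Some (Z.to_nat e)) (fst x), snd x + Z.to_nat (Z.opp e))
  end.

Definition loc (sgn : bool) (M : premodule tmon) : premodule lmon :=
  @PreModule lmon (loc_car M) (cls (locR M) (ppt M, 0)) (@loc_act sgn M).

Definition inloc (M : premodule tmon) (P : M -> Prop) (q : loc_car M) : Prop :=
  exists m n, P m /\ q = cls (locR M) (m, n).
Arguments inloc {M} P q.

Record triple := Triple {
  F1 : module tmon;           (* M' over <t>  , sections on U1 *)
  F2 : module tmon;           (* M'' over <t^-1>, sections on U2 (generator Some 1 = t^-1) *)
  F1fg : fingen F1;
  F2fg : fingen F2;
  glue : loc false F1 -> loc true F2;
  glue_iso : is_iso glue }.

Definition triple_nonzero (F : triple) : Prop :=
  (exists x : F1 F, x <> ppt (F1 F)) \/ (exists x : F2 F, x <> ppt (F2 F)).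

(* F is the (sectionwise wedge) direct sum of the subsheaves given by (P1,P2) and (Q1,Q2) *)
Definition triple_split (F : triple) (P1 Q1 : F1 F -> Prop) (P2 Q2 : F2 F -> Prop) : Prop :=
  wedge_split P1 Q1 /\ wedge_split P2 Q2 /\
  (forall q, inloc P1 q <-> inloc P2 (glue F q)) /\
  (forall q, inloc Q1 q <-> inloc Q2 (glue F q)).

Definition indecomposable_triple (F : triple) : Prop :=
  triple_nonzero F /\
  ~ (exists P1 Q1 P2 Q2, triple_split F P1 Q1 P2 Q2 /\
       (nonzero_pred P1 \/ nonzero_pred P2) /\ (nonzero_pred Q1 \/ nonzero_pred Q2)).

(* torsion / torsion-free sheaves: sections on U1, U2, U1 n U2 *)
Definition torsion_triple (F : triple) : Prop :=
  torsion_mod (F1 F) /\ torsion_mod (F2 F) /\ torsion_mod (loc false (F1 F)).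
Definition torsionfree_triple (F : triple) : Prop :=
  torsionfree_mod (F1 F) /\ torsionfree_mod (F2 F) /\ torsionfree_mod (loc false (F1 F)).

Section Graph.
Variable M : premodule tmon.
Definition sM (m : M) : M := pact M (Some 1) m.
Definition gvert (m : M) : Prop := m <> ppt M.

(* graph induced on a vertex set P: edges e -> sM e with P e, P (sM e).
   joins e a b : edge (labelled by its source) e has endpoints a, b *)
Definition joins (P : M -> Prop) (e a b : M) : Prop :=
  P e /\ P (sM e) /\ ((a = e /\ b = sM e) \/ (a = sM e /\ b = e)).
Definition uadj (P : M -> Prop) (a b : M) : Prop := exists e, joins P e a b.
Definition uconnected (P : M -> Prop) : Prop :=
  forall u v, P u -> P v -> clos_refl_trans M (uadj P) u v.
Definition ucycle (P : M -> Prop) : Prop :=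
  exists vs es : list M,
    length vs = length es /\ 1 <= length vs /\ NoDup vs /\ NoDup es /\
    forall i, i < length vs ->
      joins P (nth i es (ppt M)) (nth i vs (ppt M)) (nth (S i mod length vs) vs (ppt M)).
Definition utree (P : M -> Prop) : Prop := uconnected P /\ ~ ucycle P.
Definition dreach (P : M -> Prop) (u v : M) : Prop :=
  exists n, (forall j, j <= n -> P (Nat.iter j sM u)) /\ Nat.iter n sM u = v.
Definition is_root (P : M -> Prop) (r : M) : Prop := P r /\ ~ P (sM r).
Definition rooted_tree (P : M -> Prop) : Prop :=
  utree P /\ (exists! r, is_root P r) /\
  (forall r v, is_root P r -> P v -> dreach P v r).

Definition gamma_type1 : Prop := rooted_tree gvert.

Definition gamma_type2 : Prop :=
  exists (T : M -> Prop) (v : nat -> M) (r : M),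
    (forall x, T x -> gvert x) /\ (exists l : list M, forall x, T x -> In x l) /\
    (forall i, gvert (v i)) /\ (forall i, sM (v i) = v (S i)) /\
    (forall i j, v i = v j -> i = j) /\
    (forall x, gvert x <-> T x \/ exists i, x = v i) /\
    (forall x i, T x -> x <> v i) /\
    rooted_tree T /\ is_root T r /\ sM r = v 0.

Definition gamma_type3 : Prop :=
  exists cs : list M,
    1 <= length cs /\ NoDup cs /\ (forall c, In c cs -> gvert c) /\
    (forall i, i < length cs ->
       sM (nth i cs (ppt M)) = nth (S i mod length cs) cs (ppt M)) /\
    forall x, gvert x -> ~ In x cs ->
      let K := fun y => (gvert y /\ ~ In y cs) /\
                 clos_refl_trans M (uadj (fun z => gvert z /\ ~ In z cs)) x y in
      rooted_tree K /\ (forall r, is_root K r -> In (sM r) cs).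
End Graph.

Definition Lmod : premodule lmon := @PreModule lmon (option Z) None lmul.
Definition phi_n (n : Z) (x : Lmod) : Lmod := lmul (Some n) x.

Definition cvalid (k : nat) (x : option Z) : Prop :=
  match x with None => True | Some i => (0 <= i < Z.of_nat k)%Z end.
Definition Ccar (k : nat) : Type := {x : option Z | cvalid k x}.
Definition Cpt (k : nat) : Ccar k := exist _ None I.

Lemma cvalid_shift (k : nat) (i z : Z) :
  cvalid k (Some i) -> cvalid k (Some ((i + z) mod Z.of_nat k)%Z).
Proof. simpl; intros H; apply Z.mod_pos_bound; lia. Qed.

(* t^z acts on {1,t,...,t^(k-1)} by cyclic rotation: t^i |-> t^((i+z) mod k) *)
Definition Cact (k : nat) (a : option Z) (x : Ccar k) : Ccar k :=
  match a with
  | None => Cpt k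
  | Some z =>
      match x with
      | exist _ o h =>
          match o as o' return cvalid k o' -> Ccar k with
          | None => fun _ => Cpt k
          | Some i => fun h => exist _ (Some ((i + z) mod Z.of_nat k)%Z) (cvalid_shift z h)
          end h
      end
  end.

Definition Cmod (k : nat) : premodule lmon := @PreModule lmon (Ccar k) (Cpt k) (@Cact k).
Definition psi_m (k : nat) (m : Z) (x : Cmod k) : Cmod k := @Cact k (Some m) x.

Definition case1 (F : triple) : Prop :=
  trivial_mod (F2 F) /\ indecomposable_mod (F1 F) /\ gamma_type1 (F1 F) /\
  torsion_triple F.
Definition case2 (F : triple) : Prop :=
  trivial_mod (F1 F) /\ indecomposable_mod (F2 F) /\ gamma_type1 (F2 F) /\
  torsion_triple F.
Definition case3 (F : triple) : Prop :=
  indecomposable_mod (F1 F) /\ indecomposable_mod (F2 F) /\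
  gamma_type2 (F1 F) /\ gamma_type2 (F2 F) /\
  (exists (al : loc false (F1 F) -> Lmod) (be : loc true (F2 F) -> Lmod) (n : Z),
     is_iso al /\ is_iso be /\ forall q, be (glue F q) = phi_n n (al q)) /\
  torsionfree_triple F.
Definition case4 (F : triple) : Prop :=
  indecomposable_mod (F1 F) /\ indecomposable_mod (F2 F) /\
  gamma_type3 (F1 F) /\ gamma_type3 (F2 F) /\
  (exists (k : nat) (al : loc false (F1 F) -> Cmod k) (be : loc true (F2 F) -> Cmod k)
          (m : Z),
     0 < k /\ is_iso al /\ is_iso be /\ forall q, be (glue F q) = @psi_m k m (al q)) /\
  torsionfree_triple F.

(* An indecomposable sheaf is either torsion or torsion-free: the torsion parts
   of M' and M'' both localize to 0, so they form a subsheaf that splits off.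
   For a module over <s>, being indecomposable means that any two nonzero
   elements have a common nonzero multiple.

   In the torsion case the localization vanishes, so M' and M'' can be split
   apart and one of them is 0; the graph of the other flows to the unique
   nonzero element killed by s, which makes it a rooted tree.

   In the torsion-free case the classes of "common multiple" on either side
   localize to t^Z-orbits, which the gluing matches up; indecomposability of
   the sheaf thus makes M', M'' indecomposable and the localization a single
   orbit.  That orbit is free (~ L) or periodic (~ C_k), according as the
   modules have no s-periodic element (type 2; finite generation bounds the
   tree hanging off the ray) or have one (type 3).  Trivializing both sides
   through the same orbit map identifies the gluing with phi_0 or psi_0. *)

From Stdlib Require Import ZArith List Lia Classical ClassicalEpsilon.
From Stdlib Require Import FunctionalExtensionality PropExtensionality ProofIrrelevance.
From Stdlib Require Import Relation_Operators.

Set Implicit Arguments.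

Definition spow (M : premodule tmon) (j : nat) (m : M) : M := pact M (Some j) m.

Section ModuleBasics.
Variable M : module tmon.

Lemma spow0 m : spow M 0 m = m.
Proof. exact (act1 M m). Qed.

Lemma spow_add i j m : spow M i (spow M j m) = spow M (i + j) m.
Proof. unfold spow. rewrite (actA M). reflexivity. Qed.

Lemma spow_eq i j m : i = j -> spow M i m = spow M j m.
Proof. intros ->; reflexivity. Qed.

Lemma pact_None m : pact M None m = ppt M.
Proof. exact (act0 M m). Qed.

Lemma spow_pt j : spow M j (ppt M) = ppt M.
Proof.
  unfold spow. rewrite <- (act0 M (ppt M)) at 1. rewrite (actA M). apply (act0 M).
Qed.

Lemma pact_pt a : pact M a (ppt M) = ppt M.
Proof. destruct a. apply spow_pt. apply pact_None. Qed.

Lemma sM_spow u : sM M u = spow M 1 u.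
Proof. reflexivity. Qed.

Lemma iter_sM n u : Nat.iter n (sM M) u = spow M n u.
Proof.
  induction n; simpl. now rewrite spow0.
  rewrite IHn, sM_spow, spow_add. reflexivity.
Qed.

Lemma spow_pt_mono a j m : j <= a -> spow M j m = ppt M -> spow M a m = ppt M.
Proof.
  intros Hj H. replace a with ((a - j) + j) by lia. rewrite <- spow_add, H. apply spow_pt.
Qed.

Definition tor (m : M) : Prop := exists k, spow M k m = ppt M.

Lemma torsion_elt_tor m : torsion_elt (M:=mpre M) m <-> tor m.
Proof.
  split.
  - intros [[k|] [Ha Hm]]; [exists k; exact Hm|now elim Ha].
  - intros [k Hk]. exists (Some k). split; [discriminate|exact Hk].
Qed.

Lemma tor_pt : tor (ppt M).
Proof. exists 0. apply spow0. Qed.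

Lemma tor_spow j m : tor (spow M j m) -> tor m.
Proof. intros [k Hk]. exists (k + j). rewrite <- spow_add. exact Hk. Qed.

Definition linked (x y : M) : Prop :=
  exists a b, spow M a x = spow M b y /\ spow M a x <> ppt M.

Lemma linked_refl x : x <> ppt M -> linked x x.
Proof. intros. exists 0, 0. rewrite spow0. auto. Qed.

Lemma linked_sym x y : linked x y -> linked y x.
Proof. intros [a [b [H1 H2]]]. exists b, a. split; congruence. Qed.

Lemma linked_trans x y z : linked x y -> linked y z -> linked x z.
Proof.
  intros [a [b [H1 H2]]] [c [d [H3 H4]]].
  destruct (le_lt_dec c b).
  - exists a, (b - c + d). split; auto.
    rewrite H1, <- (Nat.sub_add c b l), <- (spow_add (b - c) c), H3, spow_add.
    apply spow_eq; lia.
  - exists (c - b + a), d. rewrite <- spow_add, H1, spow_add, Nat.sub_add by lia.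
    split; auto.
Qed.

Lemma linked_nonzero_r x y : linked x y -> y <> ppt M.
Proof.
  intros [a [b [H1 H2]]] ->. apply H2. rewrite H1. apply spow_pt.
Qed.

End ModuleBasics.

Section Splittings.
Variable M : module tmon.

Definition linked_connected : Prop :=
  forall x y : M, x <> ppt M -> y <> ppt M -> linked M x y.

Lemma submod_pt : submod (M:=mpre M) (fun m => m = ppt M).
Proof. split; auto. intros a x ->. apply pact_pt. Qed.

Lemma submod_all : submod (M:=mpre M) (fun _ => True).
Proof. split; auto. Qed.

Lemma wedge_split_all_pt : wedge_split (M:=mpre M) (fun _ => True) (fun m => m = ppt M).
Proof.
  split; [apply submod_all|split; [apply submod_pt|split; auto]].
Qed.

Lemma wedge_split_pt_all : wedge_split (M:=mpre M) (fun m => m = ppt M) (fun _ => True).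
Proof.
  split; [apply submod_pt|split; [apply submod_all|split; auto]].
Qed.

Lemma wedge_split_pt_pt : (forall m : M, m = ppt M) ->
  wedge_split (M:=mpre M) (fun m => m = ppt M) (fun m => m = ppt M).
Proof. intros Hz. split; [apply submod_pt|split; [apply submod_pt|split; auto]]. Qed.

Lemma wedge_split_tor :
  wedge_split (M:=mpre M) (tor M) (fun m => m = ppt M \/ ~ tor M m).
Proof.
  split; [|split; [|split]].
  - split; [apply tor_pt|]. intros [j|] x Hx; [|rewrite pact_None; apply tor_pt].
    destruct Hx as [k Hk]. exists k. change (spow M k (spow M j x) = ppt M).
    rewrite spow_add, Nat.add_comm, <- spow_add, Hk. apply spow_pt.
  - split; auto. intros a x [->|Hx]; [left; apply pact_pt|].
    destruct a as [j|]; [|left; apply pact_None].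
    right. intro H. exact (Hx (tor_spow _ _ H)).
  - intros x H [H'|H']; tauto.
  - intros x. destruct (classic (tor M x)); auto.
Qed.

Lemma wedge_split_linked x : wedge_split (M:=mpre M)
  (fun m => m = ppt M \/ linked M x m) (fun m => m = ppt M \/ ~ linked M x m).
Proof.
  split; [|split; [|split]].
  - split; auto. intros a m [->|Hm]; [left; apply pact_pt|].
    destruct a as [j|]; [|left; apply pact_None].
    change (pact M (Some j) m) with (spow M j m).
    destruct (classic (spow M j m = ppt M)) as [E|E]; auto. right.
    destruct Hm as [a [b [H1 H2]]].
    destruct (le_lt_dec j b).
    + exists a, (b - j). rewrite spow_add, Nat.sub_add by exact l. auto.
    + exists (a + (j - b)), 0. rewrite spow0, Nat.add_comm, <- spow_add, H1, spow_add.
      rewrite Nat.sub_add by lia. auto.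
  - split; auto. intros a m [->|Hm]; [left; apply pact_pt|].
    destruct a as [j|]; [|left; apply pact_None].
    right. intros [a [b [H1 H2]]]. apply Hm. exists a, (b + j).
    rewrite <- spow_add. auto.
  - intros m [->|H] [H'|H']; tauto.
  - intros m. destruct (classic (linked M x m)); auto.
Qed.

Lemma indecomposable_linked_connected :
  indecomposable_mod (mpre M) -> linked_connected.
Proof.
  intros [_ Hn] x y Hx Hy. apply NNPP. intro Hc. apply Hn.
  exists (fun m => m = ppt M \/ linked M x m), (fun m => m = ppt M \/ ~ linked M x m).
  split; [apply wedge_split_linked|split].
  - exists x. split; auto. right. apply linked_refl; auto.
  - exists y. split; auto.
Qed.

Lemma linked_connected_indecomposable :
  (exists x : M, x <> ppt M) -> linked_connected -> indecomposable_mod (mpre M).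
Proof.
  intros Hnz Hc. split; [exact Hnz|].
  intros [P [Q [[HP [HQ [Hd _]]] [[x [Px Hx]] [y [Qy Hy]]]]]].
  destruct (Hc x y Hx Hy) as [a [b [H1 H2]]]. apply H2.
  apply Hd; [apply (proj2 HP (Some a)); auto|].
  rewrite H1. apply (proj2 HQ (Some b)); auto.
Qed.

End Splittings.

Section Localization.
Variable M : module tmon.

Definition frac (m : M) (n : nat) : loc_car (mpre M) := cls (locR (mpre M)) (m, n).

Lemma locR_refl x : locR (mpre M) x x.
Proof. exists 0. reflexivity. Qed.

Lemma locR_sym x y : locR (mpre M) x y -> locR (mpre M) y x.
Proof. intros [k H]. exists k. symmetry. exact H. Qed.

Lemma locR_trans x y z : locR (mpre M) x y -> locR (mpre M) y z -> locR (mpre M) x z.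
Proof.
  destruct x as [m1 n1], y as [m2 n2], z as [m3 n3]. unfold locR; simpl.
  intros [k H1] [l H2]. exists (n2 + k + l).
  change (spow M (n3 + (n2 + k + l)) m1 = spow M (n1 + (n2 + k + l)) m3).
  change (spow M (n2 + k) m1 = spow M (n1 + k) m2) in H1.
  change (spow M (n3 + l) m2 = spow M (n2 + l) m3) in H2.
  replace (n3 + (n2 + k + l)) with ((n3 + l) + (n2 + k)) by lia.
  rewrite <- spow_add, H1, spow_add.
  replace (n3 + l + (n1 + k)) with ((n1 + k) + (n3 + l)) by lia.
  rewrite <- spow_add, H2, spow_add. apply spow_eq; lia.
Qed.

Lemma cls_eq x y : cls (locR (mpre M)) x = cls (locR (mpre M)) y <-> locR (mpre M) x y.
Proof.
  split.
  - intros E. change (proj1_sig (cls (locR (mpre M)) x) y).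
    rewrite E. apply locR_refl.
  - intros H. apply subset_eq_compat. apply functional_extensionality. intros z.
    apply propositional_extensionality.
    split; intro H'; eauto using locR_trans, locR_sym.
Qed.

Lemma cls_repr (q : loc_car (mpre M)) : cls (locR (mpre M)) (repr q) = q.
Proof.
  destruct q as [P p]. unfold repr, cls. simpl.
  destruct (constructive_indefinite_description _ p) as [x Hx]. simpl.
  apply subset_eq_compat. auto.
Qed.

Lemma frac_surj q : exists m n, q = frac m n.
Proof.
  exists (fst (repr q)), (snd (repr q)). unfold frac. rewrite <- surjective_pairing.
  symmetry; apply cls_repr.
Qed.

Lemma frac_eq m n m' n' :
  frac m n = frac m' n' <-> exists k, spow M (n' + k) m = spow M (n + k) m'.
Proof. unfold frac. rewrite cls_eq. reflexivity. Qed.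

Lemma frac_pt m n : frac m n = frac (ppt M) 0 <-> tor M m.
Proof.
  rewrite frac_eq. split; intros [k H]; exists k.
  - simpl in H. rewrite H. apply spow_pt.
  - simpl. rewrite H. symmetry; apply spow_pt.
Qed.

Lemma frac_pt_ne m n : frac m n <> frac (ppt M) 0 -> m <> ppt M.
Proof. intros H ->. apply H, frac_pt, tor_pt. Qed.

Definition sexp (sgn : bool) (z : Z) : Z := if sgn then (- z)%Z else z.

Lemma sexp_add sgn z w : sexp sgn (z + w) = (sexp sgn z + sexp sgn w)%Z.
Proof. destruct sgn; simpl; lia. Qed.

Lemma sexp_0 sgn : sexp sgn 0 = 0%Z.
Proof. destruct sgn; reflexivity. Qed.

Lemma sexp_surj sgn e : exists z, sexp sgn z = e.
Proof. destruct sgn; [exists (- e)%Z; simpl; lia|exists e; reflexivity]. Qed.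

Lemma loc_act_frac sgn z m n : loc_act sgn (Some z) (frac m n) =
   frac (spow M (Z.to_nat (sexp sgn z)) m) (n + Z.to_nat (- sexp sgn z)).
Proof.
  unfold loc_act. fold (sexp sgn z).
  assert (Hx : locR (mpre M) (repr (frac m n)) (m, n))
    by (apply cls_eq; rewrite cls_repr; reflexivity).
  destruct (repr (frac m n)) as [m1 n1]. simpl. destruct Hx as [k Hk]. simpl in Hk.
  change (spow M (n + k) m1 = spow M (n1 + k) m) in Hk.
  apply frac_eq. exists k. change (pact M (Some ?j) m1) with (spow M j m1).
  rewrite !spow_add.
  replace (n + Z.to_nat (- sexp sgn z) + k + Z.to_nat (sexp sgn z)) with
    ((Z.to_nat (- sexp sgn z) + Z.to_nat (sexp sgn z)) + (n + k)) by lia.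
  rewrite <- spow_add, Hk, spow_add. apply spow_eq. lia.
Qed.

Section Sign.
Variable sgn : bool.
Let X := loc sgn (mpre M).

Lemma pact_loc a q : pact X a q = loc_act sgn a q.
Proof. reflexivity. Qed.

Lemma loc_act_one q : pact X (Some 0%Z) q = q.
Proof.
  destruct (frac_surj q) as [m [n ->]]. rewrite pact_loc, loc_act_frac, sexp_0. simpl.
  rewrite spow0, Nat.add_0_r. reflexivity.
Qed.

Lemma loc_act_zero q : pact X None q = ppt X.
Proof. reflexivity. Qed.

Lemma loc_act_pt a : pact X a (ppt X) = ppt X.
Proof.
  destruct a as [z|]; [|reflexivity]. change (ppt X) with (frac (ppt M) 0).
  rewrite pact_loc, loc_act_frac.
  apply frac_pt. rewrite spow_pt. apply tor_pt.
Qed.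

Lemma loc_act_add z w q :
  pact X (Some z) (pact X (Some w) q) = pact X (Some (z + w)%Z) q.
Proof.
  destruct (frac_surj q) as [m [n ->]]. rewrite !pact_loc, !loc_act_frac, sexp_add.
  apply frac_eq. exists 0. rewrite !spow_add. apply spow_eq. lia.
Qed.

Lemma loc_torsionfree : (forall m : M, tor M m -> m = ppt M) ->
  forall z q, pact X (Some z) q = ppt X -> q = ppt X.
Proof.
  intros Ht z q. destruct (frac_surj q) as [m [n ->]].
  change (ppt X) with (frac (ppt M) 0). rewrite pact_loc, loc_act_frac.
  intros H. apply frac_pt, tor_spow, Ht in H. subst. apply frac_pt, tor_pt.
Qed.

Lemma linked_iff_frac_orbit : (forall m : M, tor M m -> m = ppt M) -> forall (x m : M) n,
  m <> ppt M -> (linked M x m <-> exists z, frac m n = pact X (Some z) (frac x 0)).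
Proof.
  intros Ht x m n Hm. split.
  - intros [a [b [H1 H2]]].
    set (e := (Z.of_nat a - Z.of_nat b - Z.of_nat n)%Z).
    destruct (sexp_surj sgn e) as [z Hz].
    exists z. rewrite pact_loc, loc_act_frac, Hz. apply frac_eq.
    exists (a + b + n). rewrite spow_add.
    replace (0 + Z.to_nat (- e) + (a + b + n)) with ((Z.to_nat (- e) + a + n) + b) by lia.
    rewrite <- (spow_add M _ b), <- H1, spow_add. apply spow_eq. unfold e. lia.
  - intros [z Hz]. rewrite pact_loc, loc_act_frac in Hz. apply frac_eq in Hz.
    destruct Hz as [k Hk]. rewrite spow_add in Hk.
    exists (n + k + Z.to_nat (sexp sgn z)), (0 + Z.to_nat (- sexp sgn z) + k).
    split; [symmetry; exact Hk|].
    intro E. apply Hm, Ht. exists (0 + Z.to_nat (- sexp sgn z) + k). rewrite Hk. exact E.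
Qed.

End Sign.
End Localization.

Lemma nat_least (Q : nat -> Prop) n : Q n -> exists m, Q m /\ forall j, j < m -> ~ Q j.
Proof.
  induction n as [n IH] using lt_wf_ind. intros Hn.
  destruct (classic (exists j, j < n /\ Q j)) as [[j [Hj Qj]]|H].
  - exact (IH j Hj Qj).
  - exists n. split; auto. intros j Hj Qj. apply H. eauto.
Qed.

Lemma nat_argmax (f : nat -> nat) L : 1 <= L ->
  exists i, i < L /\ forall j, j < L -> f j <= f i.
Proof.
  induction L as [|L IH]; intros HL; [lia|].
  destruct (Nat.eq_dec L 0) as [->|HL0].
  - exists 0. split; [lia|]. intros j Hj. replace j with 0 by lia. lia.
  - destruct IH as [i [Hi Hmax]]; [lia|].
    destruct (le_lt_dec (f L) (f i)).
    + exists i. split; [lia|]. intros j Hj.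
      destruct (Nat.eq_dec j L); [subst; auto|apply Hmax; lia].
    + exists L. split; [lia|]. intros j Hj.
      destruct (Nat.eq_dec j L); [subst; auto|]. specialize (Hmax j ltac:(lia)). lia.
Qed.

Lemma clos_refl_trans_sym (A : Type) (R : A -> A -> Prop) :
  (forall a b, R a b -> R b a) ->
  forall u v, clos_refl_trans A R u v -> clos_refl_trans A R v u.
Proof. intros HR u v H. induction H; eauto using rt_step, rt_refl, rt_trans. Qed.

Section Graph.
Variable M : module tmon.
Variable P : M -> Prop.

Lemma uadj_sym a b : uadj (mpre M) P a b -> uadj (mpre M) P b a.
Proof.
  intros [e [He1 [He2 [[-> ->]|[-> ->]]]]]; exists e; repeat split; auto.
Qed.

Lemma uadj_path u n : (forall j, j <= n -> P (spow M j u)) ->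
  clos_refl_trans _ (uadj (mpre M) P) u (spow M n u).
Proof.
  induction n; intros H.
  - rewrite spow0. apply rt_refl.
  - apply rt_trans with (spow M n u); [apply IHn; intros; apply H; lia|].
    apply rt_step. exists (spow M n u).
    unfold joins. rewrite sM_spow, spow_add, Nat.add_1_l.
    split; [apply H; lia|split; [apply H; lia|left; auto]].
Qed.

Section Descent.
Variable r : M.
Hypothesis Pr : P r.
Hypothesis nPsr : ~ P (sM M r).
Hypothesis descent : forall v, P v ->
  exists a, spow M a v = r /\ forall j, j <= a -> P (spow M j v).
Hypothesis r_aperiodic : forall j, 1 <= j -> spow M j r <> r.

Let height (v : M) : nat := epsilon (inhabits 0) (fun n => spow M n v = r).

Let height_spec v : P v -> spow M (height v) v = r.
Proof.
  intros Hv. unfold height. apply epsilon_spec.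
  destruct (descent Hv) as [a [Ha _]]. eauto.
Qed.

Let descent_time_unique v n n' : spow M n v = r -> spow M n' v = r -> n = n'.
Proof.
  intros H1 H2.
  assert (gen : forall i j, i < j -> spow M i v = r -> spow M j v = r -> False).
  { intros i j Hij Hi Hj. apply (r_aperiodic (j := j - i)); [lia|].
    rewrite <- Hi at 1. rewrite spow_add, Nat.sub_add by lia. congruence. }
  destruct (lt_eq_lt_dec n n') as [[l|e]|l]; auto; exfalso; eauto.
Qed.

Let height_edge e : P e -> P (sM M e) -> height e = S (height (sM M e)).
Proof.
  intros H1 H2. pose proof (height_spec H1) as He. destruct (height e) as [|p].
  - rewrite spow0 in He. subst. contradiction.
  - f_equal. apply (descent_time_unique (sM M e)); [|apply height_spec; exact H2].
    rewrite sM_spow, spow_add, Nat.add_1_r. exact He.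
Qed.

(* Every edge lowers the height by one, so both cycle edges at a vertex of
   maximal height start at that vertex and hence coincide. *)
Lemma no_ucycle_descent : ~ ucycle (mpre M) P.
Proof.
  intros [vs [es [Hlen [HL [Hvs [Hes Hj]]]]]].
  set (L := length vs) in *.
  destruct (nat_argmax (fun j => height (nth j vs (ppt M))) HL) as [i [Hi Hmax]].
  destruct (Hj i Hi) as [Pe [Pse [[E1 E2]|[E1 E2]]]].
  2:{ assert (HS : S i mod L < L) by (apply Nat.mod_upper_bound; lia).
      specialize (Hmax _ HS). simpl in Hmax. rewrite E2, E1, (height_edge Pe Pse) in Hmax.
      lia. }
  set (j := match i with 0 => L - 1 | S i' => i' end).
  assert (Hjl : j < L) by (unfold j; destruct i; lia).
  assert (Hji : S j mod L = i).
  { unfold j. destruct i.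
    - replace (S (L - 1)) with L by lia. apply Nat.Div0.mod_same.
    - apply Nat.mod_small. lia. }
  destruct (Hj j Hjl) as [Pe' [Pse' [[F1 F2]|[F1 F2]]]]; rewrite Hji in F2.
  - specialize (Hmax j Hjl). simpl in Hmax. rewrite F1, F2, (height_edge Pe' Pse') in Hmax.
    lia.
  - destruct (Nat.eq_dec j i) as [Eji|Nji].
    + rewrite Eji in F1.
      assert (H : nth i es (ppt M) = sM M (nth i es (ppt M))) by congruence.
      pose proof (height_edge Pe Pse) as Hh. rewrite <- H in Hh. lia.
    + apply Nji. apply (proj1 (NoDup_nth es (ppt M)) Hes); try lia. congruence.
Qed.

Lemma rooted_tree_descent : rooted_tree (mpre M) P.
Proof.
  assert (root_unique : forall r', is_root (mpre M) P r' -> r' = r).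
  { intros r' [Pr' nP']. destruct (descent Pr') as [[|a] [Ha Ha']].
    - rewrite spow0 in Ha. exact Ha.
    - exfalso. apply nP'. apply (Ha' 1). lia. }
  split; [split|split].
  - intros u v Hu Hv.
    destruct (descent Hu) as [a [Ha Ha']], (descent Hv) as [b [Hb Hb']].
    apply rt_trans with r.
    + rewrite <- Ha. apply uadj_path; auto.
    + apply clos_refl_trans_sym; [apply uadj_sym|]. rewrite <- Hb. apply uadj_path; auto.
  - exact no_ucycle_descent.
  - exists r. split; [split; assumption|]. intros r' Hr'. symmetry. auto.
  - intros r' v Hr' Hv. rewrite (root_unique r' Hr').
    destruct (descent Hv) as [a [Ha Ha']].
    exists a. rewrite iter_sM. split; auto. intros j Hj. rewrite iter_sM. auto.
Qed.

End Descent.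
End Graph.

Section GraphTypes.
Variable M : module tmon.

Lemma last_nonzero k x : spow M k x = ppt M -> x <> ppt M ->
  exists n, spow M n x <> ppt M /\ spow M (S n) x = ppt M.
Proof.
  induction k; intros H Hx.
  - rewrite spow0 in H. contradiction.
  - destruct (classic (spow M k x = ppt M)) as [E|E]; eauto.
Qed.

Lemma gamma_type1_of_torsion : (forall m : M, tor M m) -> (exists x : M, x <> ppt M) ->
  linked_connected M -> gamma_type1 (mpre M).
Proof.
  intros Ht [x Hx] Hc.
  destruct (Ht x) as [k Hk]. destruct (last_nonzero k Hk Hx) as [n [Hr1 Hr2]].
  set (r := spow M n x) in *.
  assert (Hr : spow M 1 r = ppt M) by (unfold r; rewrite spow_add; exact Hr2).
  apply rooted_tree_descent with (r := r).
  - exact Hr1.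
  - intros H. apply H. exact Hr.
  - (* As [s r = 0], the only nonzero multiple of [r] is [r] itself. *)
    intros v Hv. destruct (Hc v r Hv Hr1) as [a [[|b] [H1 H2]]].
    + rewrite spow0 in H1. exists a. split; auto.
      intros j Hj E. exact (H2 (spow_pt_mono _ _ Hj E)).
    + exfalso. apply H2. rewrite H1. apply (spow_pt_mono _ (j := 1) _); [lia|exact Hr].
  - intros j Hj E. apply Hr1. rewrite <- E. exact (spow_pt_mono _ _ Hj Hr).
Qed.

Definition periodic : Prop :=
  exists (y : M) i p, y <> ppt M /\ 1 <= p /\ spow M (i + p) y = spow M i y.

Section TorsionFree.
Hypothesis Htf : forall m : M, tor M m -> m = ppt M.

Lemma spow_nonzero j m : m <> ppt M -> spow M j m <> ppt M.
Proof. intros Hm E. apply Hm, Htf. exists j. exact E. Qed.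

Section CycleTrees.
Variable cs : list M.
Hypothesis cs_closed : forall c, In c cs -> In (sM M c) cs.
Hypothesis cs_absorbing : forall y, y <> ppt M -> exists a, In (spow M a y) cs.

Definition off_cycle (z : M) : Prop := gvert (mpre M) z /\ ~ In z cs.

Definition cycle_tree (x y : M) : Prop :=
  off_cycle y /\ clos_refl_trans M (uadj (mpre M) off_cycle) x y.

Definition exits_at (y r : M) : Prop :=
  exists a, spow M a y = r /\ (forall j, j <= a -> ~ In (spow M j y) cs) /\
    In (spow M (S a) y) cs.

Lemma In_cycle_spow c n : In c cs -> In (spow M n c) cs.
Proof.
  intros Hc. induction n; [rewrite spow0; exact Hc|].
  replace (S n) with (1 + n) by lia. rewrite <- spow_add. apply cs_closed, IHn.
Qed.

Lemma exits_at_exists y : off_cycle y -> exists r, exits_at y r.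
Proof.
  intros [Hy Hyc]. destruct (cs_absorbing Hy) as [a Ha].
  destruct (nat_least (fun a => In (spow M a y) cs) a Ha) as [[|a'] [Ha' Hmin]].
  - rewrite spow0 in Ha'. contradiction.
  - exists (spow M a' y), a'. split; [reflexivity|split; [|exact Ha']].
    intros j Hj. apply Hmin. lia.
Qed.

Lemma exits_at_unique y r r' : exits_at y r -> exits_at y r' -> r = r'.
Proof.
  intros [a [<- [Ha' Ha'']]] [b [<- [Hb' Hb'']]].
  destruct (lt_eq_lt_dec a b) as [[l|e]|l].
  - exfalso. apply (Hb' (S a)); auto.
  - congruence.
  - exfalso. apply (Ha' (S b)); auto.
Qed.

Lemma exits_at_sM e r : ~ In e cs -> exits_at (sM M e) r -> exits_at e r.
Proof.
  intros He [a [Ha [Ha' Ha'']]]. rewrite sM_spow, spow_add in Ha, Ha''.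
  exists (a + 1). split; [exact Ha|split].
  - intros [|j] Hj; [rewrite spow0; exact He|].
    specialize (Ha' j ltac:(lia)). rewrite sM_spow, spow_add in Ha'.
    replace (S j) with (j + 1) by lia. exact Ha'.
  - replace (S (a + 1)) with (S a + 1) by lia. exact Ha''.
Qed.

Lemma exits_at_path u v : clos_refl_trans _ (uadj (mpre M) off_cycle) u v ->
  forall r, exits_at u r -> exits_at v r.
Proof.
  intros H. induction H as [u v [e [[_ He] [Hs [[-> ->]|[-> ->]]]]]| |]; intros r Hr; auto.
  - destruct (exits_at_exists Hs) as [r' Hr'].
    rewrite (exits_at_unique Hr (exits_at_sM _ He Hr')). exact Hr'.
  - exact (exits_at_sM _ He Hr).
Qed.

Lemma cycle_tree_spow x v a : cycle_tree x v ->
  (forall j, j <= a -> ~ In (spow M j v) cs) -> forall j, j <= a -> cycle_tree x (spow M j v).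
Proof.
  intros [[Hv Hvc] Hxv] Hout j Hj.
  assert (Hoff : forall i, i <= a -> off_cycle (spow M i v))
    by (intros i Hi; split; [apply spow_nonzero; exact Hv|auto]).
  split; [auto|]. apply rt_trans with v; [exact Hxv|].
  apply uadj_path. intros i Hi. apply Hoff. lia.
Qed.

Lemma cycle_tree_rooted x : off_cycle x ->
  rooted_tree (mpre M) (cycle_tree x) /\
  forall r, is_root (mpre M) (cycle_tree x) r -> In (sM M r) cs.
Proof.
  intros Hx. destruct (exits_at_exists Hx) as [r0 Hr0].
  assert (descent : forall v, cycle_tree x v ->
            exists a, spow M a v = r0 /\ forall j, j <= a -> cycle_tree x (spow M j v)).
  { intros v Kv. destruct (exits_at_path (proj2 Kv) Hr0) as [a [Ha [Ha' _]]].
    exists a. split; [exact Ha|]. apply (cycle_tree_spow Kv Ha'). }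
  assert (Kx : cycle_tree x x) by (split; [exact Hx|apply rt_refl]).
  assert (Hsr0 : In (sM M r0) cs).
  { destruct Hr0 as [a [<- [_ Ha]]]. rewrite sM_spow, spow_add. exact Ha. }
  assert (Kr0 : cycle_tree x r0).
  { destruct Hr0 as [a [<- [Ha' _]]]. apply (cycle_tree_spow Kx Ha'). lia. }
  assert (tree : rooted_tree (mpre M) (cycle_tree x)).
  { apply rooted_tree_descent with (r := r0); auto.
    - intros [[_ H] _]. exact (H Hsr0).
    - intros [|j] Hj E; [lia|]. apply (proj2 (proj1 Kr0)). rewrite <- E.
      replace (S j) with (j + 1) by lia. rewrite <- spow_add. apply In_cycle_spow, Hsr0. }
  split; [exact tree|].
  intros r Hr. destruct tree as [_ [[r1 [Hr1 Huniq]] _]].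
  assert (Hr0root : is_root (mpre M) (cycle_tree x) r0)
    by (split; [exact Kr0|intros [[_ H] _]; exact (H Hsr0)]).
  rewrite <- (Huniq r Hr), (Huniq r0 Hr0root). exact Hsr0.
Qed.

End CycleTrees.

Section Cycle.
Variables (c0 : M) (k : nat).

Definition orbit_list : list M := map (fun j => spow M j c0) (seq 0 k).

Lemma length_orbit_list : length orbit_list = k.
Proof. unfold orbit_list. rewrite length_map, length_seq. reflexivity. Qed.

Lemma nth_orbit_list j : j < k -> nth j orbit_list (ppt M) = spow M j c0.
Proof.
  intros Hj. rewrite (nth_indep _ (ppt M) (spow M 0 c0)) by (rewrite length_orbit_list; lia).
  unfold orbit_list. rewrite (map_nth (fun j => spow M j c0)), seq_nth; auto.
Qed.

Lemma In_orbit_list c : In c orbit_list <-> exists j, j < k /\ c = spow M j c0.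
Proof.
  unfold orbit_list. rewrite in_map_iff. split.
  - intros [j [<- Hj]]. apply in_seq in Hj. exists j. split; [lia|reflexivity].
  - intros [j [Hj ->]]. exists j. split; [reflexivity|apply in_seq; lia].
Qed.

Hypothesis k_pos : 1 <= k.
Hypothesis c0_period : spow M k c0 = c0.
Hypothesis k_least : forall j, j < k -> ~ (1 <= j /\ spow M j c0 = c0).

Lemma spow_period_mod n : spow M n c0 = spow M (n mod k) c0.
Proof.
  assert (per : forall q n, spow M (q * k + n) c0 = spow M n c0).
  { induction q; intros m; [reflexivity|].
    replace (S q * k + m) with ((q * k + m) + k) by lia.
    rewrite <- spow_add, c0_period. apply IHq. }
  rewrite (Nat.div_mod_eq n k) at 1. rewrite Nat.mul_comm. apply per.
Qed.

Lemma In_orbit_list_spow n : In (spow M n c0) orbit_list.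
Proof.
  apply In_orbit_list. exists (n mod k).
  split; [apply Nat.mod_upper_bound; lia|apply spow_period_mod].
Qed.

Lemma NoDup_orbit_list : NoDup orbit_list.
Proof.
  assert (distinct : forall a b, a < b -> b < k -> spow M a c0 <> spow M b c0).
  { intros a b Hab Hb E. apply (k_least (j := b - a)); [lia|split; [lia|]].
    transitivity (spow M (b - a) (spow M k c0)); [rewrite c0_period; reflexivity|].
    rewrite spow_add. replace (b - a + k) with ((k - a) + b) by lia.
    rewrite <- spow_add, <- E, spow_add, Nat.sub_add by lia. exact c0_period. }
  apply (NoDup_nth orbit_list (ppt M)). rewrite length_orbit_list.
  intros a b Ha Hb E. rewrite !nth_orbit_list in E by assumption.
  destruct (lt_eq_lt_dec a b) as [[l|e]|l]; auto; exfalso.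
  - exact (distinct a b l Hb E).
  - exact (distinct b a l Ha (eq_sym E)).
Qed.

End Cycle.

Hypothesis Hconn : linked_connected M.

Lemma gamma_type3_of_periodic : periodic -> gamma_type3 (mpre M).
Proof.
  intros [y [i [p [Hy [Hp Hyp]]]]].
  set (c := spow M i y).
  assert (Hcp : spow M p c = c) by (unfold c; rewrite spow_add, Nat.add_comm; exact Hyp).
  assert (Hc0 : c <> ppt M) by (apply spow_nonzero; exact Hy).
  destruct (nat_least (fun p => 1 <= p /\ spow M p c = c) p (conj Hp Hcp))
    as [k [[Hk1 Hk] Hmin]].
  assert (cs_closed : forall d, In d (orbit_list c k) -> In (sM M d) (orbit_list c k)).
  { intros d Hd. apply In_orbit_list in Hd. destruct Hd as [j [_ ->]].
    rewrite sM_spow, spow_add. apply (In_orbit_list_spow Hk1 Hk). }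
  exists (orbit_list c k). split; [|split; [|split; [|split]]].
  - rewrite length_orbit_list. exact Hk1.
  - exact (NoDup_orbit_list Hk1 Hk Hmin).
  - intros d Hd. apply In_orbit_list in Hd. destruct Hd as [j [_ ->]].
    apply spow_nonzero. exact Hc0.
  - intros j Hj. rewrite length_orbit_list in *.
    rewrite !nth_orbit_list by (try apply Nat.mod_upper_bound; lia).
    rewrite sM_spow, spow_add. apply (spow_period_mod Hk1 Hk).
  - intros x Hx Hxn. apply (cycle_tree_rooted (cs := orbit_list c k)).
    + exact cs_closed.
    + intros z Hz. destruct (Hconn Hz Hc0) as [a [b [E _]]].
      exists a. rewrite E. apply (In_orbit_list_spow Hk1 Hk).
    + split; assumption.
Qed.

Section Ray.
Hypothesis aperiodic : ~ periodic.

Lemma spow_inj y i j : y <> ppt M -> spow M i y = spow M j y -> i = j.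
Proof.
  intros Hy E.
  assert (gen : forall i j, i < j -> spow M i y = spow M j y -> False).
  { intros a b Hab Eab. apply aperiodic. exists y, a, (b - a).
    split; [exact Hy|split; [lia|]]. rewrite Nat.add_comm, Nat.sub_add by lia.
    symmetry. exact Eab. }
  destruct (lt_eq_lt_dec i j) as [[l|e]|l]; auto; exfalso; eauto.
Qed.

Variable x : M.
Hypothesis x_nonzero : x <> ppt M.

Lemma generators_linked_bound : fingen (mpre M) ->
  exists (gs : list M) A N, forall y, y <> ppt M -> exists g c a b,
    In g gs /\ y = spow M c g /\ spow M a g = spow M b x /\ a <= A /\ b <= N.
Proof.
  intros [gs Hgs]. exists gs.
  assert (bound : forall l : list M, exists A N, forall g, In g l -> g <> ppt M ->
            exists a b, spow M a g = spow M b x /\ a <= A /\ b <= N).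
  { induction l as [|g0 l [A [N HAN]]]; [exists 0, 0; intros g []|].
    destruct (classic (g0 = ppt M)) as [E|E].
    - exists A, N. intros g [<-|Hg] Hg0; [contradiction|auto].
    - destruct (Hconn E x_nonzero) as [a [b [Hab _]]].
      exists (max A a), (max N b). intros g [<-|Hg] Hg0.
      + exists a, b. split; [exact Hab|lia].
      + destruct (HAN g Hg Hg0) as [a' [b' [H1 H2]]]. exists a', b'. split; [exact H1|lia]. }
  destruct (bound gs) as [A [N HAN]]. exists A, N. intros y Hy.
  destruct (Hgs y) as [E|[[c|] [g [Hg E]]]]; [contradiction| |].
  - assert (Hg0 : g <> ppt M) by (intros ->; apply Hy; rewrite E; apply spow_pt).
    destruct (HAN g Hg Hg0) as [a [b [Hab Hb]]]. exists g, c, a, b. auto.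
  - rewrite pact_None in E. contradiction.
Qed.

Variables (gs : list M) (A N : nat).
Hypothesis generators : forall y, y <> ppt M -> exists g c a b,
  In g gs /\ y = spow M c g /\ spow M a g = spow M b x /\ a <= A /\ b <= N.

Definition ray (i : nat) : M := spow M (S (N + i)) x.

Definition off_ray (y : M) : Prop := y <> ppt M /\ forall i, y <> ray i.

Lemma on_ray_or_below y : y <> ppt M ->
  (exists n, y = spow M n x) \/ exists e b, b <= N /\ spow M e y = spow M b x.
Proof.
  intros Hy. destruct (generators Hy) as [g [c [a [b [_ [-> [Eab [_ Hb]]]]]]]].
  destruct (le_lt_dec c a).
  - right. exists (a - c), b. rewrite spow_add, Nat.sub_add by assumption. auto.
  - left. exists (c - a + b).
    transitivity (spow M (c - a) (spow M a g)); [rewrite spow_add; apply spow_eq; lia|].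
    rewrite Eab, spow_add. reflexivity.
Qed.

Lemma off_ray_finite : exists l, forall y, off_ray y -> In y l.
Proof.
  exists (flat_map (fun g => map (fun c => spow M c g) (seq 0 (S (A + N)))) gs).
  intros y [Hy Hoff]. destruct (generators Hy) as [g [c [a [b [Hg [Ey [Eab [Ha Hb]]]]]]]].
  assert (Hc : c <= a + N).
  { apply NNPP. intro Hlt. apply (Hoff (c - a + b - S N)). rewrite Ey. unfold ray.
    transitivity (spow M (c - a) (spow M a g)); [rewrite spow_add; apply spow_eq; lia|].
    rewrite Eab, spow_add. apply spow_eq. lia. }
  apply in_flat_map. exists g. split; [exact Hg|]. apply in_map_iff.
  exists c. split; [symmetry; exact Ey|apply in_seq; lia].
Qed.

Lemma off_ray_exit y : off_ray y -> ~ off_ray (sM M y) -> y = spow M N x.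
Proof.
  intros [Hy Hoff] Hexit.
  assert (Hs : sM M y <> ppt M) by (rewrite sM_spow; apply spow_nonzero; exact Hy).
  assert (Hi : exists i, sM M y = ray i).
  { apply NNPP. intro H. apply Hexit. split; [exact Hs|]. intros i E. apply H. eauto. }
  destruct Hi as [i Hi]. unfold ray in Hi.
  assert (on_ray : forall n, y = spow M n x -> y = spow M N x).
  { intros n ->. rewrite sM_spow, spow_add in Hi. apply spow_inj in Hi; [|exact x_nonzero].
    destruct i as [|i]; [apply spow_eq; lia|].
    exfalso. apply (Hoff i). unfold ray. apply spow_eq. lia. }
  destruct (on_ray_or_below Hy) as [[n En]|[[|e] [b [Hb Eb]]]].
  - exact (on_ray n En).
  - rewrite spow0 in Eb. exact (on_ray b Eb).
  - exfalso. replace (S e) with (e + 1) in Eb by lia.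
    rewrite <- spow_add, <- sM_spow, Hi, spow_add in Eb.
    apply spow_inj in Eb; [lia|exact x_nonzero].
Qed.

Lemma off_ray_descent w : off_ray w ->
  exists a, spow M a w = spow M N x /\ forall j, j <= a -> off_ray (spow M j w).
Proof.
  intros Hw. destruct (Hconn (proj1 Hw) x_nonzero) as [a [b [Hab _]]].
  assert (Hleave : ~ off_ray (spow M (S N + a) w)).
  { rewrite <- spow_add, Hab, spow_add. intros [_ H]. apply (H b). unfold ray.
    apply spow_eq. lia. }
  destruct (nat_least (fun m => ~ off_ray (spow M m w)) _ Hleave) as [[|m] [Hm Hmin]].
  - rewrite spow0 in Hm. contradiction.
  - assert (Hin : forall j, j <= m -> off_ray (spow M j w))
      by (intros j Hj; apply NNPP, Hmin; lia).
    exists m. split; [|exact Hin].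
    apply off_ray_exit; [apply Hin; lia|].
    rewrite sM_spow, spow_add, Nat.add_1_l. exact Hm.
Qed.

Lemma gamma_type2_ray : gamma_type2 (mpre M).
Proof.
  set (r := spow M N x).
  assert (Hr : off_ray r).
  { split; [apply spow_nonzero; exact x_nonzero|]. intros i E. unfold r, ray in E.
    apply spow_inj in E; [lia|exact x_nonzero]. }
  assert (Hsr : sM M r = ray 0) by (unfold r, ray; rewrite sM_spow, spow_add; apply spow_eq; lia).
  assert (Hexit : ~ off_ray (sM M r)) by (rewrite Hsr; intros [_ H]; exact (H 0 eq_refl)).
  exists off_ray, ray, r.
  split; [|split; [|split; [|split; [|split; [|split; [|split; [|split; [|split]]]]]]]].
  - intros y Hy. apply Hy.
  - exact off_ray_finite.
  - intros i. apply spow_nonzero. exact x_nonzero.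
  - intros i. unfold ray. rewrite sM_spow, spow_add. apply spow_eq. lia.
  - intros i j E. unfold ray in E. apply spow_inj in E; [lia|exact x_nonzero].
  - intros y. split.
    + intros Hy. destruct (classic (exists i, y = ray i)) as [H|H]; [right; exact H|].
      left. split; [exact Hy|]. intros i E. apply H. eauto.
    + intros [Hy|[i ->]]; [apply Hy|apply spow_nonzero; exact x_nonzero].
  - intros y i Hy. apply Hy.
  - apply rooted_tree_descent with (r := r); auto.
    + exact off_ray_descent.
    + intros j Hj E. unfold r in E. rewrite spow_add in E.
      apply spow_inj in E; [lia|exact x_nonzero].
  - split; assumption.
  - exact Hsr.
Qed.

End Ray.

Lemma gamma_type2_of_aperiodic : ~ periodic -> fingen (mpre M) ->
  (exists x : M, x <> ppt M) -> gamma_type2 (mpre M).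
Proof.
  intros Hap Hfg [x Hx]. destruct (generators_linked_bound Hx Hfg) as [gs [A [N Hgen]]].
  exact (gamma_type2_ray Hap Hx _ Hgen).
Qed.

End TorsionFree.
End GraphTypes.

Definition bij_morphism (A : monoid0) (N P : premodule A) (g : N -> P) : Prop :=
  is_morphism g /\ (forall y, exists x, g x = y) /\ (forall x x', g x = g x' -> x = x').
Arguments bij_morphism {A N P} g.

Lemma is_iso_bij_morphism (A : monoid0) (N P : premodule A) (f : N -> P) :
  is_iso f -> bij_morphism f.
Proof.
  intros [Hm [g [H1 H2]]]. split; [exact Hm|split].
  - intros y. exists (g y). auto.
  - intros x x' E. rewrite <- (H1 x), <- (H1 x'), E. reflexivity.
Qed.

Lemma bij_morphism_inverse (A : monoid0) (N P : premodule A) (g : N -> P) :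
  bij_morphism g -> exists h : P -> N, is_iso h /\ forall x, h (g x) = x.
Proof.
  intros [[Hg0 Hg1] [Hs Hi]].
  set (h := fun y => epsilon (inhabits (ppt N)) (fun x => g x = y)).
  assert (Hgh : forall y, g (h y) = y) by (intros y; unfold h; apply epsilon_spec; auto).
  assert (Hhg : forall x, h (g x) = x) by (intros x; apply Hi; auto).
  exists h. split; [|exact Hhg]. split.
  - split; [rewrite <- Hg0; apply Hhg|].
    intros a y. rewrite <- (Hgh y) at 1. rewrite <- Hg1. apply Hhg.
  - exists g. split; auto.
Qed.

Lemma bij_morphism_comp (A : monoid0) (N P Q : premodule A) (g : N -> P) (f : P -> Q) :
  bij_morphism g -> bij_morphism f -> bij_morphism (fun x => f (g x)).
Proof.
  intros [[Hg0 Hg1] [Hgs Hgi]] [[Hf0 Hf1] [Hfs Hfi]]. split; [split|split].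
  - rewrite Hg0. exact Hf0.
  - intros a x. rewrite Hg1. apply Hf1.
  - intros y. destruct (Hfs y) as [x' <-]. destruct (Hgs x') as [x <-]. eauto.
  - intros x x' E. auto.
Qed.

(* Take [al := g^-1] and [be := (glue o g)^-1]. *)
Lemma gluing_trivialized (A : monoid0) (N X Y : premodule A) (g : N -> X) (glue : X -> Y) :
  bij_morphism g -> is_iso glue ->
  exists (al : X -> N) (be : Y -> N), is_iso al /\ is_iso be /\ forall q, be (glue q) = al q.
Proof.
  intros Hg Hglue.
  pose proof (bij_morphism_comp Hg (is_iso_bij_morphism Hglue)) as Hgg.
  destruct (bij_morphism_inverse Hg) as [al [Hal Hal1]].
  destruct (bij_morphism_inverse Hgg) as [be [Hbe Hbe1]].
  exists al, be. split; [exact Hal|split; [exact Hbe|]].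
  intros q. destruct (proj1 (proj2 Hg) q) as [x <-]. rewrite Hal1. apply Hbe1.
Qed.

Section Orbit.
Variable X : premodule lmon.
Hypothesis act_one : forall q, pact X (Some 0%Z) q = q.
Hypothesis act_add : forall z w q,
  pact X (Some z) (pact X (Some w) q) = pact X (Some (z + w)%Z) q.
Hypothesis act_zero : forall q, pact X None q = ppt X.
Hypothesis act_pt : forall a, pact X a (ppt X) = ppt X.
Hypothesis act_free : forall z q, pact X (Some z) q = ppt X -> q = ppt X.
Variable q0 : X.
Hypothesis q0_nonzero : q0 <> ppt X.
Hypothesis q0_generates : forall q, q <> ppt X -> exists z, q = pact X (Some z) q0.

Lemma act_q0_cancel z w :
  pact X (Some z) q0 = pact X (Some w) q0 -> pact X (Some (z - w)%Z) q0 = q0.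
Proof.
  intros E. rewrite <- (act_one q0) at 2. replace 0%Z with (- w + w)%Z by lia.
  rewrite <- act_add, <- E, act_add. f_equal. f_equal. lia.
Qed.

Lemma act_q0_neg z : pact X (Some z) q0 = q0 -> pact X (Some (- z)%Z) q0 = q0.
Proof.
  intros E. rewrite <- E at 1. rewrite act_add. rewrite <- (act_one q0) at 2.
  f_equal. f_equal. lia.
Qed.

Lemma act_q0_lmul a y : pact X (lmul a y) q0 = pact X a (pact X y q0).
Proof.
  destruct a as [z|], y as [w|]; simpl.
  - rewrite act_add. reflexivity.
  - rewrite act_zero, act_pt. reflexivity.
  - rewrite !act_zero. reflexivity.
  - rewrite !act_zero. reflexivity.
Qed.

Lemma act_q0_ne_pt z : pact X (Some z) q0 <> ppt X.
Proof. intros E. exact (q0_nonzero (act_free _ _ E)). Qed.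

Lemma orbit_map_L_bij : (forall z, pact X (Some z) q0 = q0 -> z = 0%Z) ->
  bij_morphism (N := Lmod) (fun y => pact X y q0).
Proof.
  intros Hfree. split; [split|split].
  - apply act_zero.
  - intros a y. apply act_q0_lmul.
  - intros y. destruct (classic (y = ppt X)) as [->|Hy]; [exists None; apply act_zero|].
    destruct (q0_generates Hy) as [z ->]. exists (Some z). reflexivity.
  - intros [z|] [w|] E; auto; simpl in E; rewrite ?act_zero in E.
    + apply act_q0_cancel, Hfree in E. f_equal. lia.
    + exfalso. exact (act_q0_ne_pt _ E).
    + exfalso. exact (act_q0_ne_pt _ (eq_sym E)).
Qed.

Lemma stabilizer_period : (exists z, z <> 0%Z /\ pact X (Some z) q0 = q0) ->
  exists k, 1 <= k /\ pact X (Some (Z.of_nat k)) q0 = q0 /\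
    forall j, j < k -> ~ (1 <= j /\ pact X (Some (Z.of_nat j)) q0 = q0).
Proof.
  intros [z [Hz E]].
  assert (Hp : 1 <= Z.to_nat (Z.abs z) /\
               pact X (Some (Z.of_nat (Z.to_nat (Z.abs z)))) q0 = q0).
  { split; [lia|]. rewrite Z2Nat.id by lia. destruct (Z_le_gt_dec 0 z).
    - rewrite Z.abs_eq by lia. exact E.
    - rewrite Z.abs_neq by lia. apply act_q0_neg, E. }
  destruct (nat_least (fun p => 1 <= p /\ pact X (Some (Z.of_nat p)) q0 = q0) _ Hp)
    as [k [[Hk1 Hk] Hmin]].
  exists k. auto.
Qed.

Section Periodic.
Variable k : nat.
Hypothesis k_pos : 1 <= k.
Hypothesis k_period : pact X (Some (Z.of_nat k)) q0 = q0.
Hypothesis k_least : forall j, j < k -> ~ (1 <= j /\ pact X (Some (Z.of_nat j)) q0 = q0).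

Lemma act_q0_period_mul w : pact X (Some (Z.of_nat k * w)%Z) q0 = q0.
Proof.
  assert (nat_mul : forall n, pact X (Some (Z.of_nat k * Z.of_nat n)%Z) q0 = q0).
  { induction n; [rewrite Z.mul_0_r; apply act_one|].
    replace (Z.of_nat k * Z.of_nat (S n))%Z with (Z.of_nat k + Z.of_nat k * Z.of_nat n)%Z
      by lia.
    rewrite <- act_add, IHn. exact k_period. }
  destruct (Z_le_gt_dec 0 w).
  - rewrite <- (Z2Nat.id w) by lia. apply nat_mul.
  - replace (Z.of_nat k * w)%Z with (- (Z.of_nat k * Z.of_nat (Z.to_nat (- w))))%Z by lia.
    apply act_q0_neg, nat_mul.
Qed.

Lemma act_q0_mod w : pact X (Some w) q0 = pact X (Some (w mod Z.of_nat k)%Z) q0.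
Proof.
  rewrite (Z.div_mod w (Z.of_nat k)) at 1 by lia.
  rewrite Z.add_comm, <- act_add, act_q0_period_mul. reflexivity.
Qed.

Lemma stabilizer_mod w : pact X (Some w) q0 = q0 -> (w mod Z.of_nat k = 0)%Z.
Proof.
  intros E. rewrite act_q0_mod in E. pose proof (Z.mod_pos_bound w (Z.of_nat k) ltac:(lia)).
  apply NNPP. intro Hn. apply (@k_least (Z.to_nat (w mod Z.of_nat k))); [lia|].
  split; [lia|]. rewrite Z2Nat.id by lia. exact E.
Qed.

Lemma Cact_one (c : Cmod k) : Cact (Some 0%Z) c = c.
Proof.
  destruct c as [[i|] h]; simpl; apply subset_eq_compat; [|reflexivity].
  simpl in h. rewrite Z.add_0_r, Z.mod_small by lia. reflexivity.
Qed.

Lemma orbit_map_C_bij : bij_morphism (N := Cmod k) (fun c => pact X (proj1_sig c) q0).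
Proof.
  split; [split|split].
  - apply act_zero.
  - intros [z|] [[i|] h]; simpl.
    + rewrite act_add, <- act_q0_mod, Z.add_comm. reflexivity.
    + rewrite act_zero, act_pt. reflexivity.
    + rewrite !act_zero. reflexivity.
    + rewrite !act_zero. reflexivity.
  - intros y. destruct (classic (y = ppt X)) as [->|Hy].
    + exists (Cpt k). apply act_zero.
    + destruct (q0_generates Hy) as [z ->].
      exists (exist (cvalid k) (Some (z mod Z.of_nat k)%Z)
                (Z.mod_pos_bound z (Z.of_nat k) ltac:(lia))).
      symmetry. apply act_q0_mod.
  - intros [[i|] h] [[j|] h'] E; simpl in E; apply subset_eq_compat; rewrite ?act_zero in E.
    + apply act_q0_cancel, stabilizer_mod in E. simpl in h, h'.
      pose proof (Z.div_mod (i - j) (Z.of_nat k) ltac:(lia)) as Hdm.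
      rewrite E in Hdm. assert ((i - j) / Z.of_nat k = 0)%Z by nia. f_equal. nia.
    + exfalso. exact (act_q0_ne_pt _ E).
    + exfalso. exact (act_q0_ne_pt _ (eq_sym E)).
    + reflexivity.
Qed.

End Periodic.

Variable Y : premodule lmon.
Variable glue : X -> Y.
Hypothesis glue_is_iso : is_iso glue.

Lemma gluing_L : (forall z, pact X (Some z) q0 = q0 -> z = 0%Z) ->
  exists (al : X -> Lmod) (be : Y -> Lmod) (n : Z),
     is_iso al /\ is_iso be /\ forall q, be (glue q) = phi_n n (al q).
Proof.
  intros Hfree.
  destruct (gluing_trivialized (orbit_map_L_bij Hfree) glue_is_iso) as [al [be [Hal [Hbe E]]]].
  exists al, be, 0%Z. split; [exact Hal|split; [exact Hbe|]].
  intros q. rewrite E. unfold phi_n. symmetry. apply lmul1.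
Qed.

Lemma gluing_C : (exists z, z <> 0%Z /\ pact X (Some z) q0 = q0) ->
  exists (k : nat) (al : X -> Cmod k) (be : Y -> Cmod k) (m : Z),
     0 < k /\ is_iso al /\ is_iso be /\ forall q, be (glue q) = @psi_m k m (al q).
Proof.
  intros Hz. destruct (stabilizer_period Hz) as [k [Hk1 [Hk Hmin]]].
  destruct (gluing_trivialized (orbit_map_C_bij Hk1 Hk Hmin) glue_is_iso)
    as [al [be [Hal [Hbe E]]]].
  exists k, al, be, 0%Z. split; [lia|split; [exact Hal|split; [exact Hbe|]]].
  intros q. rewrite E. unfold psi_m. symmetry. apply Cact_one. exact Hk1.
Qed.

End Orbit.

Section LocalizedSubmodules.
Variable M : module tmon.
Variable sgn : bool.
Let X := loc sgn (mpre M).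

Lemma frac_pt_eq n : frac M (ppt M) n = ppt X.
Proof. apply frac_pt, tor_pt. Qed.

Lemma inloc_submod (P : M -> Prop) : submod (M := mpre M) P ->
  (forall q : X, q = ppt X) -> forall q : X, inloc P q.
Proof. intros [HP _] Hz q. exists (ppt M), 0. split; [exact HP|apply Hz]. Qed.

Lemma loc_trivial_of_torsion : (forall m, tor M m) -> forall q : X, q = ppt X.
Proof. intros H q. destruct (frac_surj M q) as [m [n ->]]. apply frac_pt, H. Qed.

Lemma inloc_tor q : inloc (tor M) q <-> q = ppt X.
Proof.
  split.
  - intros [m [n [Hm ->]]]. apply frac_pt, Hm.
  - intros ->. exists (ppt M), 0. split; [apply tor_pt|reflexivity].
Qed.

Lemma inloc_nontor q : inloc (fun m => m = ppt M \/ ~ tor M m) q.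
Proof.
  destruct (frac_surj M q) as [m [n ->]]. destruct (classic (tor M m)).
  - exists (ppt M), 0. split; [auto|]. apply frac_pt. auto.
  - exists m, n. auto.
Qed.

Hypothesis tf : forall m : M, tor M m -> m = ppt M.

Lemma inloc_linked x q : x <> ppt M ->
  (inloc (fun m => m = ppt M \/ linked M x m) q <->
   q = ppt X \/ exists z, q = pact X (Some z) (frac M x 0)).
Proof.
  intros Hx. split.
  - intros [m [n [[->|Hm] ->]]]; [left; apply frac_pt_eq|right].
    apply (linked_iff_frac_orbit sgn tf x n (linked_nonzero_r Hm)). exact Hm.
  - intros [->|[z Hz]]; [exists (ppt M), 0; auto|].
    destruct (frac_surj M q) as [m [n E]]. exists m, n. split; [|exact E].
    destruct (classic (m = ppt M)) as [Hm|Hm]; [left; exact Hm|right].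
    apply (linked_iff_frac_orbit sgn tf x n Hm). exists z. rewrite <- E. exact Hz.
Qed.

Lemma inloc_unlinked x q : x <> ppt M ->
  (inloc (fun m => m = ppt M \/ ~ linked M x m) q <->
   q = ppt X \/ ~ exists z, q = pact X (Some z) (frac M x 0)).
Proof.
  intros Hx. split.
  - intros [m [n [Hm ->]]].
    destruct (classic (m = ppt M)) as [->|E]; [left; apply frac_pt_eq|].
    destruct Hm as [|Hm]; [contradiction|right].
    intro Hex. apply Hm. apply (linked_iff_frac_orbit sgn tf x n E). exact Hex.
  - intros [->|Hn]; [exists (ppt M), 0; auto|].
    destruct (frac_surj M q) as [m [n E]]. exists m, n. split; [|exact E].
    destruct (classic (m = ppt M)) as [Hm|Hm]; [left; exact Hm|right]. intro HE.
    apply Hn. rewrite E. apply (linked_iff_frac_orbit sgn tf x n Hm). exact HE.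
Qed.

Hypothesis conn : linked_connected M.

Lemma loc_orbit_of_connected x : x <> ppt M ->
  forall q : X, q <> ppt X -> exists z, q = pact X (Some z) (frac M x 0).
Proof.
  intros Hx q Hq. destruct (frac_surj M q) as [m [n ->]].
  apply (linked_iff_frac_orbit sgn tf x n (frac_pt_ne Hq)). apply conn; auto.
  exact (frac_pt_ne Hq).
Qed.

(* Connectedness transports a period from one element to any other. *)
Lemma loc_stabilizer_periodic (q : X) : q <> ppt X ->
  ((exists z, z <> 0%Z /\ pact X (Some z) q = q) <-> periodic M).
Proof.
  intros Hq. destruct (frac_surj M q) as [m [n ->]].
  assert (Hm : m <> ppt M) by (apply frac_pt_ne with n; exact Hq).
  split.
  - intros [z [Hz E]]. change (loc_act sgn (Some z) (frac M m n) = frac M m n) in E.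
    rewrite loc_act_frac in E. apply frac_eq in E.
    destruct E as [k Hk]. rewrite spow_add in Hk.
    assert (sexp sgn z <> 0%Z) by (destruct sgn; simpl; lia).
    destruct (Z_lt_le_dec 0 (sexp sgn z)).
    + exists m, (n + k), (Z.to_nat (sexp sgn z)). split; [exact Hm|split; [lia|]].
      transitivity (spow M (n + k + Z.to_nat (sexp sgn z)) m); [apply spow_eq; lia|].
      rewrite Hk. apply spow_eq; lia.
    + exists m, (n + k), (Z.to_nat (- sexp sgn z)). split; [exact Hm|split; [lia|]].
      transitivity (spow M (n + Z.to_nat (- sexp sgn z) + k) m); [apply spow_eq; lia|].
      rewrite <- Hk. apply spow_eq; lia.
  - intros [y [i [p [Hy [Hp E]]]]]. destruct (conn Hm Hy) as [a [b [Hab _]]].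
    assert (Hper : spow M (a + i + p) m = spow M (a + i) m).
    { replace (a + i + p) with ((i + p) + a) by lia. rewrite <- spow_add, Hab, spow_add.
      replace (i + p + b) with (b + (i + p)) by lia. rewrite <- spow_add, E, spow_add.
      replace (b + i) with (i + b) by lia. rewrite <- spow_add, <- Hab, spow_add.
      apply spow_eq; lia. }
    destruct (sexp_surj sgn (Z.of_nat p)) as [z Hz]. exists z. split.
    { intro E0. rewrite E0, sexp_0 in Hz. lia. }
    change (loc_act sgn (Some z) (frac M m n) = frac M m n).
    rewrite loc_act_frac, Hz, Nat2Z.id.
    replace (Z.to_nat (- Z.of_nat p)) with 0 by lia.
    apply frac_eq. exists (a + i). rewrite spow_add.
    replace (n + (a + i) + p) with (n + (a + i + p)) by lia.
    rewrite <- spow_add, Hper, spow_add. apply spow_eq; lia.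
Qed.

End LocalizedSubmodules.

Section Triples.
Variable F : triple.
Notation M1 := (F1 F).
Notation M2 := (F2 F).
Notation X1 := (loc false (mpre M1)).
Notation X2 := (loc true (mpre M2)).

Lemma glue_bij : bij_morphism (glue F).
Proof. exact (is_iso_bij_morphism (glue_iso F)). Qed.

Lemma glue_eq_pt q : glue F q = ppt X2 <-> q = ppt X1.
Proof.
  destruct glue_bij as [[Hg0 _] [_ Hgi]].
  split; [intro E; apply Hgi; rewrite Hg0; exact E|intros ->; exact Hg0].
Qed.

Lemma triple_split_tor : triple_split F
  (tor M1) (fun m => m = ppt M1 \/ ~ tor M1 m) (tor M2) (fun m => m = ppt M2 \/ ~ tor M2 m).
Proof.
  split; [apply wedge_split_tor|split; [apply wedge_split_tor|split]]; intros q.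
  - rewrite (inloc_tor M1 false q), (inloc_tor M2 true (glue F q)), glue_eq_pt.
    reflexivity.
  - split; intros _; apply inloc_nontor.
Qed.

Lemma triple_split_of_trivial_loc P1 Q1 P2 Q2 :
  (forall q : X1, q = ppt X1) -> (forall q : X2, q = ppt X2) ->
  wedge_split (M := mpre M1) P1 Q1 -> wedge_split (M := mpre M2) P2 Q2 ->
  triple_split F P1 Q1 P2 Q2.
Proof.
  intros Hz1 Hz2 H1 H2. split; [exact H1|split; [exact H2|]].
  destruct H1 as [HP1 [HQ1 _]], H2 as [HP2 [HQ2 _]].
  split; intros q; split; intros _;
    first [apply (@inloc_submod M1 false)|apply (@inloc_submod M2 true)]; assumption.
Qed.

Lemma indecomposable_torsion_or_free : indecomposable_triple F ->
  ((forall m : M1, tor M1 m) /\ (forall m : M2, tor M2 m)) \/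
  ((forall m : M1, tor M1 m -> m = ppt M1) /\ (forall m : M2, tor M2 m -> m = ppt M2)).
Proof.
  intros [_ Hnd].
  destruct (classic (nonzero_pred (M := mpre M1) (tor M1) \/
                     nonzero_pred (M := mpre M2) (tor M2))) as [Ht|Ht].
  - left. split; intros m; apply NNPP; intro Hm; apply Hnd; do 4 eexists;
      (split; [exact triple_split_tor|split; [exact Ht|]]);
      [left|right]; exists m; (split; [right; exact Hm|intros ->; apply Hm, tor_pt]).
  - right. split; intros m Hm; apply NNPP; intro H; apply Ht; [left|right]; exists m; auto.
Qed.

Section TorsionCase.
Hypothesis Hind : indecomposable_triple F.
Hypothesis tor1 : forall m : M1, tor M1 m.
Hypothesis tor2 : forall m : M2, tor M2 m.

Let triv1 : forall q : X1, q = ppt X1 := @loc_trivial_of_torsion M1 false tor1.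
Let triv2 : forall q : X2, q = ppt X2 := @loc_trivial_of_torsion M2 true tor2.

Lemma torsion_triple_of_torsion : torsion_triple F.
Proof.
  split; [intros m; apply torsion_elt_tor, tor1|split; [intros m; apply torsion_elt_tor, tor2|]].
  intros q. exists (Some 0%Z). split; [discriminate|apply triv1].
Qed.

Lemma torsion_one_side_trivial :
  (forall m : M1, m = ppt M1) \/ (forall m : M2, m = ppt M2).
Proof.
  apply NNPP. intros H. apply (proj2 Hind).
  exists (fun _ => True), (fun m => m = ppt M1), (fun m => m = ppt M2), (fun _ => True).
  split; [apply triple_split_of_trivial_loc; auto using wedge_split_all_pt, wedge_split_pt_all|].
  split.
  - left. apply NNPP. intro H1. apply H. left. intros m. apply NNPP. intro Hm.
    apply H1. exists m. split; [exact I|exact Hm].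
  - right. apply NNPP. intro H2. apply H. right. intros m. apply NNPP. intro Hm.
    apply H2. exists m. split; [exact I|exact Hm].
Qed.

Lemma torsion_case1 : (forall m : M2, m = ppt M2) -> case1 F.
Proof.
  intros Hz2.
  assert (Hnz : exists x : M1, x <> ppt M1)
    by (destruct (proj1 Hind) as [H|[y Hy]]; [exact H|elim (Hy (Hz2 y))]).
  assert (Ind : indecomposable_mod (mpre M1)).
  { split; [exact Hnz|]. intros [P [Q [HPQ [HP HQ]]]]. apply (proj2 Hind).
    exists P, Q, (fun m => m = ppt M2), (fun m => m = ppt M2).
    split; [apply triple_split_of_trivial_loc; auto using wedge_split_pt_pt|].
    split; left; assumption. }
  split; [exact Hz2|split; [exact Ind|split; [|exact torsion_triple_of_torsion]]].
  apply gamma_type1_of_torsion; auto. apply indecomposable_linked_connected, Ind.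
Qed.

Lemma torsion_case2 : (forall m : M1, m = ppt M1) -> case2 F.
Proof.
  intros Hz1.
  assert (Hnz : exists y : M2, y <> ppt M2)
    by (destruct (proj1 Hind) as [[x Hx]|H]; [elim (Hx (Hz1 x))|exact H]).
  assert (Ind : indecomposable_mod (mpre M2)).
  { split; [exact Hnz|]. intros [P [Q [HPQ [HP HQ]]]]. apply (proj2 Hind).
    exists (fun m => m = ppt M1), (fun m => m = ppt M1), P, Q.
    split; [apply triple_split_of_trivial_loc; auto using wedge_split_pt_pt|].
    split; right; assumption. }
  split; [exact Hz1|split; [exact Ind|split; [|exact torsion_triple_of_torsion]]].
  apply gamma_type1_of_torsion; auto. apply indecomposable_linked_connected, Ind.
Qed.

End TorsionCase.

Section TorsionFreeCase.
Hypothesis Hind : indecomposable_triple F.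
Hypothesis tf1 : forall m : M1, tor M1 m -> m = ppt M1.
Hypothesis tf2 : forall m : M2, tor M2 m -> m = ppt M2.

Lemma torsionfree_triple_of_torsionfree : torsionfree_triple F.
Proof.
  split; [intros m Hm; apply tf1, torsion_elt_tor, Hm|].
  split; [intros m Hm; apply tf2, torsion_elt_tor, Hm|].
  intros q [[z|] [Ha E]]; [exact (@loc_torsionfree M1 false tf1 _ _ E)|now elim Ha].
Qed.

Lemma torsionfree_F1_nonzero : exists x : M1, x <> ppt M1.
Proof.
  apply NNPP. intro H0. destruct (proj1 Hind) as [Hx|[y Hy]]; [contradiction|].
  destruct glue_bij as [[Hg0 _] [Hgs _]]. destruct (Hgs (frac M2 y 0)) as [q Hq].
  destruct (frac_surj M1 q) as [m [n ->]].
  assert (m = ppt M1) by (apply NNPP; intro; apply H0; eauto). subst m.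
  rewrite (@frac_pt_eq M1 false), Hg0 in Hq. apply Hy, tf2. apply (frac_pt M2 y 0). symmetry. exact Hq.
Qed.

Lemma glue_orbit x : x <> ppt M1 -> exists y, y <> ppt M2 /\ forall q,
  (exists z, glue F q = pact X2 (Some z) (frac M2 y 0)) <->
  (exists z, q = pact X1 (Some z) (frac M1 x 0)).
Proof.
  intros Hx. destruct glue_bij as [[_ Hg1] [_ Hgi]].
  destruct (frac_surj M2 (glue F (frac M1 x 0))) as [y [n Hy]].
  assert (Hyn : y <> ppt M2).
  { intros ->. apply Hx, tf1, (frac_pt M1 x 0). apply glue_eq_pt.
    rewrite Hy. apply frac_pt_eq. }
  destruct (proj1 (linked_iff_frac_orbit true tf2 y n Hyn) (linked_refl _ Hyn)) as [w Hw].
  rewrite <- Hy in Hw. exists y. split; [exact Hyn|]. intros q. split.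
  - intros [z Hz]. exists (z - w)%Z. apply Hgi.
    rewrite Hg1, Hw, loc_act_add, Hz. f_equal. f_equal. lia.
  - intros [z ->]. exists (z + w)%Z. rewrite Hg1, Hw, loc_act_add. reflexivity.
Qed.

Lemma triple_split_linked x y : x <> ppt M1 -> y <> ppt M2 ->
  (forall q, (exists z, glue F q = pact X2 (Some z) (frac M2 y 0)) <->
             (exists z, q = pact X1 (Some z) (frac M1 x 0))) ->
  triple_split F (fun m => m = ppt M1 \/ linked M1 x m) (fun m => m = ppt M1 \/ ~ linked M1 x m)
                 (fun m => m = ppt M2 \/ linked M2 y m) (fun m => m = ppt M2 \/ ~ linked M2 y m).
Proof.
  intros Hx Hy Horb.
  split; [apply wedge_split_linked|split; [apply wedge_split_linked|split]]; intros q.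
  - rewrite (inloc_linked false tf1 q Hx), (inloc_linked true tf2 (glue F q) Hy).
    rewrite glue_eq_pt, Horb. reflexivity.
  - rewrite (inloc_unlinked false tf1 q Hx), (inloc_unlinked true tf2 (glue F q) Hy).
    rewrite glue_eq_pt, Horb. reflexivity.
Qed.

Lemma torsionfree_linked_connected : linked_connected M1 /\ linked_connected M2.
Proof.
  destruct torsionfree_F1_nonzero as [x Hx]. destruct (glue_orbit Hx) as [y [Hy Horb]].
  pose proof (triple_split_linked Hx Hy Horb) as Hsplit.
  assert (nzP : nonzero_pred (M := mpre M1) (fun m => m = ppt M1 \/ linked M1 x m))
    by (exists x; split; [right; apply linked_refl|]; exact Hx).
  assert (conn1 : forall m, m <> ppt M1 -> linked M1 x m).
  { intros m Hm. apply NNPP. intro Hn. apply (proj2 Hind). do 4 eexists.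
    split; [exact Hsplit|split; [left; exact nzP|left; exists m; auto]]. }
  assert (conn2 : forall m, m <> ppt M2 -> linked M2 y m).
  { intros m Hm. apply NNPP. intro Hn. apply (proj2 Hind). do 4 eexists.
    split; [exact Hsplit|split; [left; exact nzP|right; exists m; auto]]. }
  split; intros a b Ha Hb; eapply linked_trans; eauto using linked_sym.
Qed.

Lemma torsionfree_indecomposable_sides :
  indecomposable_mod (mpre M1) /\ indecomposable_mod (mpre M2).
Proof.
  destruct torsionfree_linked_connected as [C1 C2].
  destruct torsionfree_F1_nonzero as [x Hx]. destruct (glue_orbit Hx) as [y [Hy _]].
  split; apply linked_connected_indecomposable; eauto.
Qed.

Lemma torsionfree_periodic_iff : periodic M1 <-> periodic M2.
Proof.
  destruct torsionfree_linked_connected as [C1 C2].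
  destruct torsionfree_F1_nonzero as [x Hx].
  assert (Hq : frac M1 x 0 <> ppt X1) by (intro E; apply Hx, tf1, (frac_pt M1 x 0), E).
  assert (Hgq : glue F (frac M1 x 0) <> ppt X2) by (rewrite glue_eq_pt; exact Hq).
  destruct glue_bij as [[_ Hg1] [_ Hgi]].
  rewrite <- (loc_stabilizer_periodic C1 Hq), <- (loc_stabilizer_periodic C2 Hgq).
  split; intros [z [Hz E]]; exists z; split; auto.
  - rewrite <- Hg1. f_equal. exact E.
  - apply Hgi. rewrite Hg1. exact E.
Qed.

Lemma torsionfree_case : case3 F \/ case4 F.
Proof.
  destruct torsionfree_linked_connected as [C1 C2].
  destruct torsionfree_indecomposable_sides as [Ind1 Ind2].
  destruct torsionfree_F1_nonzero as [x Hx].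
  assert (Hq : frac M1 x 0 <> ppt X1) by (intro E; apply Hx, tf1, (frac_pt M1 x 0), E).
  pose proof (@loc_orbit_of_connected M1 false tf1 C1 x Hx) as Hgen.
  pose proof (@loc_act_one M1 false) as act1. pose proof (@loc_act_add M1 false) as actD.
  pose proof (@loc_act_zero M1 false) as act0. pose proof (@loc_act_pt M1 false) as actpt.
  pose proof (@loc_torsionfree M1 false tf1) as actfree.
  destruct (classic (periodic M1)) as [Hper|Hap].
  - right. split; [exact Ind1|split; [exact Ind2|split; [|split]]].
    + exact (gamma_type3_of_periodic tf1 C1 Hper).
    + exact (gamma_type3_of_periodic tf2 C2 (proj1 torsionfree_periodic_iff Hper)).
    + split; [|exact torsionfree_triple_of_torsionfree].
      apply (gluing_C act1 actD act0 actpt actfree Hq Hgen (glue_iso F)).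
      apply (loc_stabilizer_periodic C1 Hq), Hper.
  - left. split; [exact Ind1|split; [exact Ind2|split; [|split]]].
    + exact (gamma_type2_of_aperiodic tf1 C1 Hap (F1fg F) (proj1 Ind1)).
    + apply (gamma_type2_of_aperiodic tf2 C2); [|apply F2fg|exact (proj1 Ind2)].
      rewrite <- torsionfree_periodic_iff. exact Hap.
    + split; [|exact torsionfree_triple_of_torsionfree].
      apply (gluing_L act1 actD act0 actpt actfree Hq Hgen (glue_iso F)).
      intros z Hz. apply NNPP. intro Hz0. apply Hap.
      apply (loc_stabilizer_periodic C1 Hq). eauto.
Qed.

End TorsionFreeCase.
End Triples.

Theorem mainTheorem12 (F : triple) :
  indecomposable_triple F -> case1 F \/ case2 F \/ case3 F \/ case4 F.
Proof.
  intros Hind.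
  destruct (indecomposable_torsion_or_free Hind) as [[tor1 tor2]|[tf1 tf2]].
  - destruct (torsion_one_side_trivial Hind tor1 tor2) as [Hz1|Hz2].
    + right; left. exact (torsion_case2 Hind tor1 tor2 Hz1).
    + left. exact (torsion_case1 Hind tor1 tor2 Hz2).
  - right; right. exact (torsionfree_case Hind tf1 tf2).
Qed.
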